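(* For every odd $r\ge1$, the tuple $(p_{r,n}1_n)_{n\ge0}$, where $p_{r,n}=\sum_{i=1}^nx_i^r$ is the $r$th power sum, lies in the center $Z(\mathcal{NB}_t)$.
   Context: Let $\Bbbk$ be a field of characteristic $\neq2$, $t\in\{0,1\}$, and let $\mathcal{NB}_t$ be the nil-Brauer category: the strict graded $\Bbbk$-linear monoidal category (tensor $\star$, unit $\mathbb1$, composition $\circ$) generated by an object $B$ and morphisms $x:B\to B$ (degree 2), $\tau:B\star B\to B\star B$ (degree $-2$), $\cap:B\star B\to\mathbb1$, $\cup:\mathbb1\to B\star B$ (degree 0), with relations ($1=1_B$): $\tau\circ\tau=0$; $(\tau\star1)\circ(1\star\tau)\circ(\tau\star1)=(1\star\tau)\circ(\tau\star1)\circ(1\star\tau)$; $\cap\circ\cup=t1_{\mathbb1}$; $(\cap\star1)\circ(1\star\cup)=1=(1\star\cap)\circ(\cup\star1)$; $\cap\circ\tau=0$; $(1\star\cap)\circ(\tau\star1)=(\cap\star1)\circ(1\star\tau)$; $(x\star1)\circ\tau-\tau\circ(1\star x)=1\star1-\cup\circ\cap$; $\cap\circ(1\star x)=-\cap\circ(x\star1)$. For $g\in\Bbbk[x_1,\dots,x_n]$, $g1_n$ is the endomorphism of $B^{\star n}$ obtained by substituting $x_i\mapsto1^{\star(i-1)}\star x\star1^{\star(n-i)}$. The center $Z(\mathcal{NB}_t)$ consists of tuples $(z_n)_{n\ge0}$, $z_n\in\mathrm{End}(B^{\star n})$, with $z_m\circ f=f\circ z_n$ for all $f:B^{\star n}\to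 B^{\star m}$. *)

(* Presentation of the nil-Brauer category NB_t by
   generators and relations, as a strict K-linear monoidal category.
   Objects B^{*n} are identified with n : nat (B^{*n} * B^{*m} = B^{*(n+m)},
   unit = 0).  Morphisms are formal (untyped) terms, with a typing judgement
   [typed f n m] (f : B^{*n} -> B^{*m}); the morphism space Hom(n,m) is the
   set of typed terms modulo [eqv K t n m], the smallest congruence (w.r.t.
   composition, tensor product and K-linear structure) containing the axioms
   of a strict K-linear monoidal category and the defining relations of NB_t. *)
From mathcomp Require Import all_boot all_algebra.
Set Implicit Arguments. Unset Strict Implicit. Unset Printing Implicit Defensive.
Import GRing.Theory.
Local Open Scope ring_scope.

Section NB.
Variable K : fieldType.

Inductive term : Type :=
| Tid   : nat -> term
| Tx    : term
| Ttau  : term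
| Tcap  : term
| Tcup  : term
| Tcomp : term -> term -> term       (* Tcomp g f = g o f *)
| Ttens : term -> term -> term
| Tzero : term
| Tadd  : term -> term -> term
| Tscale : K -> term -> term.

Inductive typed : term -> nat -> nat -> Prop :=
| ty_id n : typed (Tid n) n n
| ty_x : typed Tx 1 1
| ty_tau : typed Ttau 2 2
| ty_cap : typed Tcap 2 0
| ty_cup : typed Tcup 0 2
| ty_comp g f n m p : typed g m p -> typed f n m -> typed (Tcomp g f) n p
| ty_tens f g n1 m1 n2 m2 :
    typed f n1 m1 -> typed g n2 m2 -> typed (Ttens f g) (n1 + n2) (m1 + m2)
| ty_zero n m : typed Tzero n m
| ty_add f g n m : typed f n m -> typed g n m -> typed (Tadd f g) n m
| ty_scale a f n m : typed f n m -> typed (Tscale a f) n m.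

Notation "1B" := (Tid 1).
Notation Tneg f := (Tscale (-1) f).

Inductive eqv (t : bool) : nat -> nat -> term -> term -> Prop :=
| eqv_refl n m f : typed f n m -> eqv t n m f f
| eqv_sym n m f g : eqv t n m f g -> eqv t n m g f
| eqv_trans n m f g h : eqv t n m f g -> eqv t n m g h -> eqv t n m f h
| eqv_comp n m p g g' f f' :
    eqv t m p g g' -> eqv t n m f f' -> eqv t n p (Tcomp g f) (Tcomp g' f')
| eqv_tens n1 m1 n2 m2 f f' g g' :
    eqv t n1 m1 f f' -> eqv t n2 m2 g g' ->
    eqv t (n1 + n2) (m1 + m2) (Ttens f g) (Ttens f' g')
| eqv_add n m f f' g g' :
    eqv t n m f f' -> eqv t n m g g' -> eqv t n m (Tadd f g) (Tadd f' g')
| eqv_scale n m a f f' : eqv t n m f f' -> eqv t n m (Tscale a f) (Tscale a f')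
| eqv_idl n m f : typed f n m -> eqv t n m (Tcomp (Tid m) f) f
| eqv_idr n m f : typed f n m -> eqv t n m (Tcomp f (Tid n)) f
| eqv_compA n m p q h g f : typed h p q -> typed g m p -> typed f n m ->
    eqv t n q (Tcomp h (Tcomp g f)) (Tcomp (Tcomp h g) f)
| eqv_tensA n1 m1 n2 m2 n3 m3 f g h :
    typed f n1 m1 -> typed g n2 m2 -> typed h n3 m3 ->
    eqv t (n1 + n2 + n3) (m1 + m2 + m3) (Ttens (Ttens f g) h) (Ttens f (Ttens g h))
| eqv_tens1l n m f : typed f n m -> eqv t n m (Ttens (Tid 0) f) f
| eqv_tens1r n m f : typed f n m -> eqv t n m (Ttens f (Tid 0)) f
| eqv_tens_id n m : eqv t (n + m) (n + m) (Ttens (Tid n) (Tid m)) (Tid (n + m))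
| eqv_interchange n1 m1 p1 n2 m2 p2 f1 g1 f2 g2 :
    typed f1 n1 m1 -> typed g1 m1 p1 -> typed f2 n2 m2 -> typed g2 m2 p2 ->
    eqv t (n1 + n2) (p1 + p2) (Tcomp (Ttens g1 g2) (Ttens f1 f2))
                               (Ttens (Tcomp g1 f1) (Tcomp g2 f2))
| eqv_addA n m f g h : typed f n m -> typed g n m -> typed h n m ->
    eqv t n m (Tadd f (Tadd g h)) (Tadd (Tadd f g) h)
| eqv_addC n m f g : typed f n m -> typed g n m -> eqv t n m (Tadd f g) (Tadd g f)
| eqv_add0 n m f : typed f n m -> eqv t n m (Tadd Tzero f) f
| eqv_scale0 n m f : typed f n m -> eqv t n m (Tscale 0 f) Tzero
| eqv_scale1 n m f : typed f n m -> eqv t n m (Tscale 1 f) f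
| eqv_scaleA n m a b f : typed f n m ->
    eqv t n m (Tscale a (Tscale b f)) (Tscale (a * b) f)
| eqv_scaleDl n m a b f : typed f n m ->
    eqv t n m (Tscale (a + b) f) (Tadd (Tscale a f) (Tscale b f))
| eqv_scaleDr n m a f g : typed f n m -> typed g n m ->
    eqv t n m (Tscale a (Tadd f g)) (Tadd (Tscale a f) (Tscale a g))
| eqv_compDl n m p g1 g2 f : typed g1 m p -> typed g2 m p -> typed f n m ->
    eqv t n p (Tcomp (Tadd g1 g2) f) (Tadd (Tcomp g1 f) (Tcomp g2 f))
| eqv_compDr n m p g f1 f2 : typed g m p -> typed f1 n m -> typed f2 n m ->
    eqv t n p (Tcomp g (Tadd f1 f2)) (Tadd (Tcomp g f1) (Tcomp g f2))
| eqv_compZl n m p a g f : typed g m p -> typed f n m ->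
    eqv t n p (Tcomp (Tscale a g) f) (Tscale a (Tcomp g f))
| eqv_compZr n m p a g f : typed g m p -> typed f n m ->
    eqv t n p (Tcomp g (Tscale a f)) (Tscale a (Tcomp g f))
| eqv_tensDl n1 m1 n2 m2 f1 f2 g : typed f1 n1 m1 -> typed f2 n1 m1 -> typed g n2 m2 ->
    eqv t (n1 + n2) (m1 + m2) (Ttens (Tadd f1 f2) g) (Tadd (Ttens f1 g) (Ttens f2 g))
| eqv_tensDr n1 m1 n2 m2 f g1 g2 : typed f n1 m1 -> typed g1 n2 m2 -> typed g2 n2 m2 ->
    eqv t (n1 + n2) (m1 + m2) (Ttens f (Tadd g1 g2)) (Tadd (Ttens f g1) (Ttens f g2))
| eqv_tensZl n1 m1 n2 m2 a f g : typed f n1 m1 -> typed g n2 m2 ->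
    eqv t (n1 + n2) (m1 + m2) (Ttens (Tscale a f) g) (Tscale a (Ttens f g))
| eqv_tensZr n1 m1 n2 m2 a f g : typed f n1 m1 -> typed g n2 m2 ->
    eqv t (n1 + n2) (m1 + m2) (Ttens f (Tscale a g)) (Tscale a (Ttens f g))
| nb_tau2 : eqv t 2 2 (Tcomp Ttau Ttau) Tzero
| nb_braid : eqv t 3 3
    (Tcomp (Ttens Ttau 1B) (Tcomp (Ttens 1B Ttau) (Ttens Ttau 1B)))
    (Tcomp (Ttens 1B Ttau) (Tcomp (Ttens Ttau 1B) (Ttens 1B Ttau)))
| nb_bubble : eqv t 0 0 (Tcomp Tcap Tcup) (Tscale (t%:R) (Tid 0))
| nb_zigzag1 : eqv t 1 1 (Tcomp (Ttens Tcap 1B) (Ttens 1B Tcup)) 1B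
| nb_zigzag2 : eqv t 1 1 (Tcomp (Ttens 1B Tcap) (Ttens Tcup 1B)) 1B
| nb_captau : eqv t 2 0 (Tcomp Tcap Ttau) Tzero
| nb_capslide : eqv t 3 1 (Tcomp (Ttens 1B Tcap) (Ttens Ttau 1B))
                           (Tcomp (Ttens Tcap 1B) (Ttens 1B Ttau))
| nb_dot : eqv t 2 2
    (Tadd (Tcomp (Ttens Tx 1B) Ttau) (Tneg (Tcomp Ttau (Ttens 1B Tx))))
    (Tadd (Ttens 1B 1B) (Tneg (Tcomp Tcup Tcap)))
| nb_capdot : eqv t 2 0 (Tcomp Tcap (Ttens 1B Tx)) (Tneg (Tcomp Tcap (Ttens Tx 1B))).

(* x_i 1_n  (0-based index i < n): 1^{*i} * x * 1^{*(n-i-1)} *)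
Definition xi (n i : nat) : term := Ttens (Ttens (Tid i) Tx) (Tid (n - i.+1)).

Fixpoint endpow (n : nat) (f : term) (r : nat) : term :=
  if r is r'.+1 then Tcomp f (endpow n f r') else Tid n.

Fixpoint sum_terms (s : seq term) : term :=
  if s is f :: s' then Tadd f (sum_terms s') else Tzero.

Definition power_sum (r n : nat) : term :=
  sum_terms [seq endpow n (xi n i) r | i <- iota 0 n].

End NB.

From mathcomp Require Import all_boot all_algebra zify.
Set Implicit Arguments. Unset Strict Implicit. Unset Printing Implicit Defensive.
Import GRing.Theory.
Local Open Scope ring_scope.

(* Commuting with the power sums is preserved by composition, linear
   combinations and tensor products, the latter because
   p_{r,a+b} 1_{a+b} = p_{r,a} 1_a ⋆ 1_b + 1_a ⋆ p_{r,b} 1_b; so it suffices to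
   check the generators.  Dots slide through a cup or a
   cap at the cost of a sign, hence (x_1^r + x_2^r) ∘ cup = 0 = cap ∘ (x_1^r + x_2^r)
   for odd r.  For τ, iterating x_1 τ = τ x_2 + 1 - cup ∘ cap and its mirror
   image x_2 τ = τ x_1 + cup ∘ cap - 1 expresses (x_1^r + x_2^r) τ - τ (x_1^r + x_2^r)
   as a sum over a + b = r - 1 of x_1^a x_2^b - x_2^a x_1^b, which cancels after
   the reindexing a <-> b, and of x_2^a cup cap x_1^b - x_1^a cup cap x_2^b,
   which vanishes termwise because moving the dots across the cup and the cap
   costs the sign (-1)^(a+b) = 1. *)

Lemma in_cons_inv (T : eqType) (P : T -> Prop) a s :
  {in a :: s, forall b, P b} -> P a /\ {in s, forall b, P b}.
Proof. by move=> H; split=> [|b Hb]; apply: H; rewrite inE ?eqxx ?Hb ?orbT. Qed.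

Lemma rev_iota0 k : rev (iota 0 k) = [seq k - i.+1 | i <- iota 0 k]%N.
Proof.
apply: (@eq_from_nth _ 0%N); first by rewrite size_map size_rev.
move=> i; rewrite size_rev size_iota => Hi.
by rewrite (nth_map 0%N) ?size_iota // nth_rev ?size_iota // !nth_iota //; lia.
Qed.

Section NilBrauerCalculus.
Variables (K : fieldType) (t : bool).

Local Notation term := (term K).
Local Notation "f ≡[ n , m ] g" := (eqv t n m f g)
  (at level 70, format "f  ≡[ n ,  m ]  g").
Local Notation "g ∘ f" := (Tcomp g f) (at level 45, left associativity).
Local Notation "f ⊗ g" := (Ttens f g) (at level 40, left associativity).
Local Notation "f ⊕ g" := (Tadd f g) (at level 50, left associativity).
Local Notation "⊖ f" := (Tscale (-1) f) (at level 35, right associativity).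
Local Notation "f ⊖ g" := (Tadd f (Tscale (-1) g)) (at level 50, left associativity).
Local Notation Id := (Tid K).
Local Notation I := (Tid K 1).
Local Notation zero := (Tzero K).
Local Notation x := (Tx K).
Local Notation τ := (Ttau K).
Local Notation cap := (Tcap K).
Local Notation cup := (Tcup K).
Local Notation "f ^[ n ] a" := (endpow n f a) (at level 30, n at level 0, format "f ^[ n ]  a").

(** * Typing and the linear structure of the Hom spaces *)

Lemma typed_tens (f g : term) n1 m1 n2 m2 n m :
  typed f n1 m1 -> typed g n2 m2 -> n = (n1 + n2)%N -> m = (m1 + m2)%N ->
  typed (f ⊗ g) n m.
Proof. by move=> ? ? -> ->; constructor. Qed.

Lemma typed_endpow n (f : term) r : typed f n n -> typed (f^[n] r) n n.
Proof. by move=> Hf; elim: r => [|r IH] /=; [apply: ty_id | apply: ty_comp Hf IH]. Qed.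

Ltac arith := first [reflexivity | lia].

Ltac typing :=
  match goal with
  | |- typed (_ ⊗ _) _ _ => apply: typed_tens; [typing | typing | arith | arith]
  | |- typed (_ ∘ _) _ _ => apply: ty_comp; [typing | typing]
  | |- typed (_ ⊕ _) _ _ => apply: ty_add; [typing | typing]
  | |- typed (Tscale _ _) _ _ => apply: ty_scale; typing
  | |- typed (endpow _ _ _) _ _ => apply: typed_endpow; typing
  | |- typed (Id _) _ _ => apply: ty_id
  | |- typed x _ _ => apply: ty_x
  | |- typed τ _ _ => apply: ty_tau
  | |- typed cap _ _ => apply: ty_cap
  | |- typed cup _ _ => apply: ty_cup
  | |- typed zero _ _ => apply: ty_zero
  | |- _ = _ => arith
  | |- _ => first [eassumption | solve [eauto 3]]
  end.

Tactic Notation "via" constr(h) := apply: (@eqv_trans K t _ _ _ h).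
Ltac refl := apply: (eqv_refl t); typing.

Lemma eqv_compl n m p (g f f' : term) :
  typed g m p -> f ≡[n, m] f' -> g ∘ f ≡[n, p] g ∘ f'.
Proof. by move=> Hg; apply: eqv_comp (eqv_refl t Hg). Qed.

Lemma eqv_compr n m p (g g' f : term) :
  typed f n m -> g ≡[m, p] g' -> g ∘ f ≡[n, p] g' ∘ f.
Proof. by move=> Hf Hg; apply: eqv_comp Hg (eqv_refl t Hf). Qed.

Lemma eqv_tensE N M n1 m1 n2 m2 (f f' g g' : term) :
  f ≡[n1, m1] f' -> g ≡[n2, m2] g' -> N = (n1 + n2)%N -> M = (m1 + m2)%N ->
  f ⊗ g ≡[N, M] f' ⊗ g'.
Proof. by move=> ? ? -> ->; apply: eqv_tens. Qed.

Lemma eqv_tensl N M n1 m1 n2 m2 (f g g' : term) :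
  typed f n1 m1 -> g ≡[n2, m2] g' -> N = (n1 + n2)%N -> M = (m1 + m2)%N ->
  f ⊗ g ≡[N, M] f ⊗ g'.
Proof. by move=> Hf; apply: eqv_tensE (eqv_refl t Hf). Qed.

Lemma eqv_tensr N M n1 m1 n2 m2 (f f' g : term) :
  typed g n2 m2 -> f ≡[n1, m1] f' -> N = (n1 + n2)%N -> M = (m1 + m2)%N ->
  f ⊗ g ≡[N, M] f' ⊗ g.
Proof. by move=> Hg Hf; apply: eqv_tensE Hf (eqv_refl t Hg). Qed.

Lemma tensA N M n1 m1 n2 m2 n3 m3 (f g h : term) :
  typed f n1 m1 -> typed g n2 m2 -> typed h n3 m3 ->
  N = (n1 + n2 + n3)%N -> M = (m1 + m2 + m3)%N ->
  f ⊗ g ⊗ h ≡[N, M] f ⊗ (g ⊗ h).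
Proof. by move=> ? ? ? -> ->; apply: eqv_tensA. Qed.

Lemma tens_id N a b : N = (a + b)%N -> Id a ⊗ Id b ≡[N, N] Id N.
Proof. by move=> ->; apply: eqv_tens_id. Qed.

Lemma interchange N M n1 m1 p1 n2 m2 p2 (f1 g1 f2 g2 : term) :
  typed f1 n1 m1 -> typed g1 m1 p1 -> typed f2 n2 m2 -> typed g2 m2 p2 ->
  N = (n1 + n2)%N -> M = (p1 + p2)%N ->
  (g1 ⊗ g2) ∘ (f1 ⊗ f2) ≡[N, M] (g1 ∘ f1) ⊗ (g2 ∘ f2).
Proof. by move=> ? ? ? ? -> ->; apply: (@eqv_interchange _ _ n1 m1 p1 n2 m2 p2). Qed.

Lemma tensDl N M n1 m1 n2 m2 (f1 f2 g : term) :
  typed f1 n1 m1 -> typed f2 n1 m1 -> typed g n2 m2 ->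
  N = (n1 + n2)%N -> M = (m1 + m2)%N -> (f1 ⊕ f2) ⊗ g ≡[N, M] f1 ⊗ g ⊕ f2 ⊗ g.
Proof. by move=> ? ? ? -> ->; apply: eqv_tensDl. Qed.

Lemma tensDr N M n1 m1 n2 m2 (f g1 g2 : term) :
  typed f n1 m1 -> typed g1 n2 m2 -> typed g2 n2 m2 ->
  N = (n1 + n2)%N -> M = (m1 + m2)%N -> f ⊗ (g1 ⊕ g2) ≡[N, M] f ⊗ g1 ⊕ f ⊗ g2.
Proof. by move=> ? ? ? -> ->; apply: eqv_tensDr. Qed.

Lemma tensZl N M n1 m1 n2 m2 a (f g : term) : typed f n1 m1 -> typed g n2 m2 ->
  N = (n1 + n2)%N -> M = (m1 + m2)%N -> Tscale a f ⊗ g ≡[N, M] Tscale a (f ⊗ g).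
Proof. by move=> ? ? -> ->; apply: eqv_tensZl. Qed.

Lemma tensZr N M n1 m1 n2 m2 a (f g : term) : typed f n1 m1 -> typed g n2 m2 ->
  N = (n1 + n2)%N -> M = (m1 + m2)%N -> f ⊗ Tscale a g ≡[N, M] Tscale a (f ⊗ g).
Proof. by move=> ? ? -> ->; apply: eqv_tensZr. Qed.

Lemma comp0l n m p (f : term) : typed f n m -> zero ∘ f ≡[n, p] zero.
Proof.
move=> Hf; via (Tscale 0 zero ∘ f).
  by apply: (eqv_compr Hf); apply: eqv_sym; apply: (@eqv_scale0 _ _ m p); typing.
via (Tscale 0 (zero ∘ f)); first by apply: eqv_compZl; typing.
by apply: eqv_scale0; typing.
Qed.

Lemma comp0r n m p (g : term) : typed g m p -> g ∘ zero ≡[n, p] zero.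
Proof.
move=> Hg; via (g ∘ Tscale 0 zero).
  by apply: (eqv_compl Hg); apply: eqv_sym; apply: (@eqv_scale0 _ _ n m); typing.
via (Tscale 0 (g ∘ zero)); first by apply: eqv_compZr; typing.
by apply: eqv_scale0; typing.
Qed.

Lemma tens0l n1 m1 n2 m2 (g : term) :
  typed g n2 m2 -> zero ⊗ g ≡[n1 + n2, m1 + m2] zero.
Proof.
move=> Hg; via (Tscale 0 zero ⊗ g).
  by apply: (eqv_tensr Hg); first by apply: eqv_sym; apply: (@eqv_scale0 _ _ n1 m1); typing.
via (Tscale 0 (zero ⊗ g)); first by apply: tensZl; typing.
by apply: eqv_scale0; typing.
Qed.

Lemma tens0r n1 m1 n2 m2 (f : term) :
  typed f n1 m1 -> f ⊗ zero ≡[n1 + n2, m1 + m2] zero.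
Proof.
move=> Hf; via (f ⊗ Tscale 0 zero).
  by apply: (eqv_tensl Hf); first by apply: eqv_sym; apply: (@eqv_scale0 _ _ n2 m2); typing.
via (Tscale 0 (f ⊗ zero)); first by apply: tensZr; typing.
by apply: eqv_scale0; typing.
Qed.

Lemma eqv_addr0 n m (f : term) : typed f n m -> f ⊕ zero ≡[n, m] f.
Proof. by move=> Hf; via (zero ⊕ f); [apply: eqv_addC | apply: eqv_add0]; typing. Qed.

Lemma eqv_subrr n m (f : term) : typed f n m -> f ⊖ f ≡[n, m] zero.
Proof.
move=> Hf; via (Tscale 1 f ⊖ f).
  by apply: eqv_add; [apply: eqv_sym; apply: eqv_scale1 | refl].
via (Tscale (1 + -1) f); first by apply: eqv_sym; apply: eqv_scaleDl.
by rewrite subrr; apply: eqv_scale0.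
Qed.

Lemma eqv_opprK n m (f : term) : typed f n m -> ⊖ ⊖ f ≡[n, m] f.
Proof.
move=> Hf; via (Tscale ((-1) * (-1)) f); first exact: eqv_scaleA.
by rewrite mulN1r opprK; apply: eqv_scale1.
Qed.

Lemma eqv_oppr0 n m : ⊖ zero ≡[n, m] zero.
Proof.
via (⊖ Tscale 0 zero); first by apply: eqv_scale; apply: eqv_sym; apply: eqv_scale0; typing.
via (Tscale (-1 * 0) zero); first by apply: eqv_scaleA; typing.
by rewrite mulr0; apply: eqv_scale0; typing.
Qed.

Lemma subr_eqv n m (f g h : term) : typed f n m -> typed g n m -> typed h n m ->
  f ⊖ g ≡[n, m] h -> f ≡[n, m] g ⊕ h.
Proof.
move=> Hf Hg Hh Hfgh.
via (f ⊕ zero); first by apply: eqv_sym; apply: eqv_addr0.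
via (f ⊕ (⊖ g ⊕ g)).
  apply: eqv_add; first by refl.
  apply: eqv_sym; via (⊖ g ⊖ ⊖ g); last by apply: eqv_subrr; typing.
  by apply: eqv_add; [refl | apply: eqv_sym; apply: eqv_opprK].
via (f ⊖ g ⊕ g); first by apply: eqv_addA; typing.
by via (h ⊕ g); [apply: eqv_add => //; refl | apply: eqv_addC].
Qed.

Lemma eqv_addrACA n m (a b c d : term) :
  typed a n m -> typed b n m -> typed c n m -> typed d n m ->
  (a ⊕ b) ⊕ (c ⊕ d) ≡[n, m] (a ⊕ c) ⊕ (b ⊕ d).
Proof.
move=> Ha Hb Hc Hd.
via (a ⊕ (b ⊕ (c ⊕ d))); first by apply: eqv_sym; apply: eqv_addA; typing.
via (a ⊕ ((c ⊕ b) ⊕ d)).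
  apply: eqv_add; first by refl.
  via ((b ⊕ c) ⊕ d); first by apply: eqv_addA.
  by apply: eqv_add; [apply: eqv_addC | refl].
via (a ⊕ (c ⊕ (b ⊕ d))).
  by apply: eqv_add; [refl | apply: eqv_sym; apply: eqv_addA].
by apply: eqv_addA; typing.
Qed.

Lemma scale_comp n m p a b (g f : term) : typed g m p -> typed f n m ->
  Tscale a g ∘ Tscale b f ≡[n, p] Tscale (a * b) (g ∘ f).
Proof.
move=> Hg Hf; via (Tscale a (g ∘ Tscale b f)); first by apply: (@eqv_compZl _ _ n m p); typing.
via (Tscale a (Tscale b (g ∘ f))); first by apply: eqv_scale; apply: (@eqv_compZr _ _ n m p).
by apply: eqv_scaleA; typing.
Qed.

(** * Finite sums *)

Local Notation "'Σ_' ( i <- s ) F" := (sum_terms [seq F | i <- s])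
  (at level 41, F at level 41, i, s at level 50).

Section FiniteSums.
Variables (n m : nat).
Implicit Types (F G : nat -> term) (s : seq nat).

Lemma typed_sum F s : {in s, forall i, typed (F i) n m} -> typed (Σ_(i <- s) F i) n m.
Proof.
elim: s => [|a s IH] /= HF; first exact: ty_zero.
by case/in_cons_inv: HF => ? ?; apply: ty_add; auto.
Qed.

Lemma eqv_sum F G s : {in s, forall i, F i ≡[n, m] G i} ->
  Σ_(i <- s) F i ≡[n, m] Σ_(i <- s) G i.
Proof.
elim: s => [|a s IH] /= HFG; first by refl.
by case/in_cons_inv: HFG => ? ?; apply: eqv_add; auto.
Qed.

Lemma sumD F G s : {in s, forall i, typed (F i) n m} -> {in s, forall i, typed (G i) n m} ->
  Σ_(i <- s) (F i ⊕ G i) ≡[n, m] Σ_(i <- s) F i ⊕ Σ_(i <- s) G i.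
Proof.
elim: s => [|a s IH] /= HF HG; first by apply: eqv_sym; apply: eqv_add0; typing.
case/in_cons_inv: HF => ? HF; case/in_cons_inv: HG => ? HG.
have ? := typed_sum HF; have ? := typed_sum HG.
via ((F a ⊕ G a) ⊕ (Σ_(i <- s) F i ⊕ Σ_(i <- s) G i)); first by apply: eqv_add; auto; refl.
exact: eqv_addrACA.
Qed.

Lemma sumN F s : {in s, forall i, typed (F i) n m} ->
  Σ_(i <- s) ⊖ F i ≡[n, m] ⊖ Σ_(i <- s) F i.
Proof.
elim: s => [|a s IH] /= HF; first by apply: eqv_sym; apply: eqv_oppr0.
case/in_cons_inv: HF => ? HF; have ? := typed_sum HF.
via (⊖ F a ⊕ ⊖ Σ_(i <- s) F i); first by apply: eqv_add; auto; refl.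
by apply: eqv_sym; apply: eqv_scaleDr.
Qed.

Lemma sumB F G s : {in s, forall i, typed (F i) n m} -> {in s, forall i, typed (G i) n m} ->
  Σ_(i <- s) (F i ⊖ G i) ≡[n, m] Σ_(i <- s) F i ⊖ Σ_(i <- s) G i.
Proof.
move=> HF HG; via (Σ_(i <- s) F i ⊕ Σ_(i <- s) ⊖ G i).
  by apply: sumD => // i Hi; apply: ty_scale; apply: HG.
by apply: eqv_add; [apply: (eqv_refl t (typed_sum HF)) | apply: sumN].
Qed.

Lemma sum_cat F s1 s2 : {in s1 ++ s2, forall i, typed (F i) n m} ->
  Σ_(i <- s1 ++ s2) F i ≡[n, m] Σ_(i <- s1) F i ⊕ Σ_(i <- s2) F i.
Proof.
elim: s1 => [|a s1 IH] /= HF; first by apply: eqv_sym; apply: eqv_add0; apply: typed_sum.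
case/in_cons_inv: HF => ? HF.
have ? : typed (Σ_(i <- s1) F i) n m by apply: typed_sum => i Hi; apply: HF; rewrite mem_cat Hi.
have ? : typed (Σ_(i <- s2) F i) n m.
  by apply: typed_sum => i Hi; apply: HF; rewrite mem_cat Hi orbT.
via (F a ⊕ (Σ_(i <- s1) F i ⊕ Σ_(i <- s2) F i)); first by apply: eqv_add; auto; refl.
exact: eqv_addA.
Qed.

Lemma sum_rev F s : {in s, forall i, typed (F i) n m} ->
  Σ_(i <- rev s) F i ≡[n, m] Σ_(i <- s) F i.
Proof.
elim: s => [|a s IH] HF; first by apply: (eqv_refl t); exact: ty_zero.
case/in_cons_inv: HF => ? HF; have ? := typed_sum HF.
rewrite rev_cons -cats1 /=; via (Σ_(i <- rev s) F i ⊕ Σ_(i <- [:: a]) F i).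
  by apply: sum_cat => i; rewrite mem_cat mem_rev inE => /orP[/HF | /eqP ->].
via (Σ_(i <- s) F i ⊕ F a); last exact: eqv_addC.
by apply: eqv_add; [exact: IH | apply: eqv_addr0].
Qed.

End FiniteSums.

Lemma comp_sumr n m p (g : term) (F : nat -> term) s : typed g m p ->
  {in s, forall i, typed (F i) n m} ->
  g ∘ Σ_(i <- s) F i ≡[n, p] Σ_(i <- s) (g ∘ F i).
Proof.
move=> Hg; elim: s => [|a s IH] /= HF; first exact: comp0r Hg.
case/in_cons_inv: HF => ? HF; have ? := typed_sum HF.
via (g ∘ F a ⊕ g ∘ Σ_(i <- s) F i); first by apply: (@eqv_compDr _ _ n m p).
by apply: eqv_add; auto; refl.
Qed.

Lemma tens_suml n1 m1 n2 m2 (F : nat -> term) (g : term) s :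
  {in s, forall i, typed (F i) n1 m1} -> typed g n2 m2 ->
  (Σ_(i <- s) F i) ⊗ g ≡[n1 + n2, m1 + m2] Σ_(i <- s) (F i ⊗ g).
Proof.
move=> + Hg; elim: s => [|a s IH] /= HF; first exact: tens0l Hg.
case/in_cons_inv: HF => ? HF; have ? := typed_sum HF.
via (F a ⊗ g ⊕ (Σ_(i <- s) F i) ⊗ g); first by apply: tensDl; typing.
by apply: eqv_add; auto; refl.
Qed.

Lemma tens_sumr n1 m1 n2 m2 (f : term) (G : nat -> term) s :
  typed f n1 m1 -> {in s, forall i, typed (G i) n2 m2} ->
  f ⊗ (Σ_(i <- s) G i) ≡[n1 + n2, m1 + m2] Σ_(i <- s) (f ⊗ G i).
Proof.
move=> Hf; elim: s => [|a s IH] /= HG; first exact: tens0r Hf.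
case/in_cons_inv: HG => ? HG; have ? := typed_sum HG.
via (f ⊗ G a ⊕ f ⊗ (Σ_(i <- s) G i)); first by apply: tensDr; typing.
by apply: eqv_add; auto; refl.
Qed.

(** * Monoidal bookkeeping and powers *)

Lemma tens_split_lr N M n1 m1 n2 m2 (f g : term) : typed f n1 m1 -> typed g n2 m2 ->
  N = (n1 + n2)%N -> M = (m1 + m2)%N -> (f ⊗ Id m2) ∘ (Id n1 ⊗ g) ≡[N, M] f ⊗ g.
Proof.
move=> Hf Hg -> ->; via ((f ∘ Id n1) ⊗ (Id m2 ∘ g)); first by apply: interchange; typing.
by apply: eqv_tens; [apply: eqv_idr | apply: eqv_idl].
Qed.

Lemma tens_split_rl N M n1 m1 n2 m2 (f g : term) : typed f n1 m1 -> typed g n2 m2 ->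
  N = (n1 + n2)%N -> M = (m1 + m2)%N -> (Id m1 ⊗ g) ∘ (f ⊗ Id n2) ≡[N, M] f ⊗ g.
Proof.
move=> Hf Hg -> ->; via ((Id m1 ∘ f) ⊗ (g ∘ Id n2)); first by apply: interchange; typing.
by apply: eqv_tens; [apply: eqv_idl | apply: eqv_idr].
Qed.

Lemma id_tens_comp N M k n m p (g f : term) : typed g m p -> typed f n m ->
  N = (k + n)%N -> M = (k + p)%N -> Id k ⊗ (g ∘ f) ≡[N, M] (Id k ⊗ g) ∘ (Id k ⊗ f).
Proof.
move=> Hg Hf -> ->; apply: eqv_sym.
via ((Id k ∘ Id k) ⊗ (g ∘ f)); first by apply: interchange; typing.
by apply: eqv_tensr; [typing | apply: eqv_idl; typing | ..]; typing.
Qed.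

Lemma comp_tens_id N M k n m p (g f : term) : typed g m p -> typed f n m ->
  N = (n + k)%N -> M = (p + k)%N -> (g ∘ f) ⊗ Id k ≡[N, M] (g ⊗ Id k) ∘ (f ⊗ Id k).
Proof.
move=> Hg Hf -> ->; apply: eqv_sym.
via ((g ∘ f) ⊗ (Id k ∘ Id k)); first by apply: interchange; typing.
by apply: eqv_tensl; [typing | apply: eqv_idl; typing | ..]; typing.
Qed.

Section EndomorphismPowers.
Variable n : nat.
Implicit Types f g : term.

Lemma eqv_endpow f g r : f ≡[n, n] g -> f^[n] r ≡[n, n] g^[n] r.
Proof. by move=> Hfg; elim: r => [|r IH] /=; [refl | exact: eqv_comp Hfg IH]. Qed.

Lemma endpowSr f r : typed f n n -> f^[n] r.+1 ≡[n, n] f^[n] r ∘ f.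
Proof.
move=> Hf; elim: r => [|r IH] /=.
  by via f; [apply: eqv_idr | apply: eqv_sym; apply: eqv_idl].
have Hr := typed_endpow r Hf.
via (f ∘ (f^[n] r ∘ f)); first exact: eqv_compl Hf IH.
by apply: eqv_compA; typing.
Qed.

End EndomorphismPowers.

Lemma endpow_tens_id a b (f : term) r : typed f a a ->
  (f ⊗ Id b)^[a + b] r ≡[a + b, a + b] f^[a] r ⊗ Id b.
Proof.
move=> Hf; elim: r => [|r IH] /=; first by apply: eqv_sym; apply: eqv_tens_id.
via ((f ⊗ Id b) ∘ (f^[a] r ⊗ Id b)); first by apply: (eqv_compl _ IH); typing.
via ((f ∘ f^[a] r) ⊗ (Id b ∘ Id b)); first by apply: interchange; typing.
by apply: eqv_tensl; [typing | apply: eqv_idl; typing | ..]; typing.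
Qed.

Lemma endpow_id_tens a b (f : term) r : typed f b b ->
  (Id a ⊗ f)^[a + b] r ≡[a + b, a + b] Id a ⊗ f^[b] r.
Proof.
move=> Hf; elim: r => [|r IH] /=; first by apply: eqv_sym; apply: eqv_tens_id.
via ((Id a ⊗ f) ∘ (Id a ⊗ f^[b] r)); first by apply: (eqv_compl _ IH); typing.
via ((Id a ∘ Id a) ⊗ (f ∘ f^[b] r)); first by apply: interchange; typing.
by apply: eqv_tensr; [typing | apply: eqv_idl; typing | ..]; typing.
Qed.

Section SkewCommutation.
Variables (n m : nat) (Y W : term).
Hypotheses (HY : typed Y n n) (HW : typed W n n) (WY : W ∘ Y ≡[n, n] Y ∘ W).

Lemma endpow_commute k : W^[n] k ∘ Y ≡[n, n] Y ∘ W^[n] k.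
Proof.
elim: k => [|k IH] /=; first by via Y; [apply: eqv_idl | apply: eqv_sym; apply: eqv_idr].
via (W ∘ (W^[n] k ∘ Y)); first by apply: eqv_sym; apply: eqv_compA; typing.
via (W ∘ (Y ∘ W^[n] k)); first exact: eqv_compl HW IH.
via (W ∘ Y ∘ W^[n] k); first by apply: eqv_compA; typing.
via (Y ∘ W ∘ W^[n] k); first by apply: (eqv_compr _ WY); typing.
by apply: eqv_sym; apply: eqv_compA; typing.
Qed.

Lemma comp_endpow_skew (c : term) (s : K) b : typed c n m ->
  c ∘ Y ≡[n, m] Tscale s (c ∘ W) -> c ∘ Y^[n] b ≡[n, m] Tscale (s ^+ b) (c ∘ W^[n] b).
Proof.
move=> Hc cY; elim: b => [|b IH]; first by apply: eqv_sym; apply: eqv_scale1; typing.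
via (c ∘ (Y^[n] b ∘ Y)); first by apply: eqv_compl; [typing | apply: endpowSr].
via (c ∘ Y^[n] b ∘ Y); first by apply: eqv_compA; typing.
via (Tscale (s ^+ b) (c ∘ W^[n] b) ∘ Y); first exact: eqv_compr HY IH.
via (Tscale (s ^+ b) (c ∘ W^[n] b ∘ Y)); first by apply: eqv_compZl; typing.
rewrite exprSr.
via (Tscale (s ^+ b) (Tscale s (c ∘ W^[n] b.+1))); last by apply: eqv_scaleA; typing.
apply: eqv_scale.
via (c ∘ (W^[n] b ∘ Y)); first by apply: eqv_sym; apply: eqv_compA; typing.
via (c ∘ (Y ∘ W^[n] b)); first exact: eqv_compl Hc (endpow_commute b).
via (c ∘ Y ∘ W^[n] b); first by apply: eqv_compA; typing.
via (Tscale s (c ∘ W) ∘ W^[n] b); first by apply: (eqv_compr _ cY); typing.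
via (Tscale s (c ∘ W ∘ W^[n] b)); first by apply: eqv_compZl; typing.
by apply: eqv_scale; apply: eqv_sym; apply: (@eqv_compA K t n n n m c W (W^[n] b)); typing.
Qed.

Lemma endpow_comp_skew (c : term) (s : K) a : typed c m n ->
  Y ∘ c ≡[m, n] Tscale s (W ∘ c) -> Y^[n] a ∘ c ≡[m, n] Tscale (s ^+ a) (W^[n] a ∘ c).
Proof.
move=> Hc Yc; elim: a => [|a IH]; first by apply: eqv_sym; apply: eqv_scale1; typing.
via (Y ∘ (Y^[n] a ∘ c)); first by apply: eqv_sym; apply: eqv_compA; typing.
via (Y ∘ Tscale (s ^+ a) (W^[n] a ∘ c)); first exact: eqv_compl HY IH.
via (Tscale (s ^+ a) (Y ∘ (W^[n] a ∘ c))); first by apply: eqv_compZr; typing.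
rewrite exprSr.
via (Tscale (s ^+ a) (Tscale s (W^[n] a.+1 ∘ c))); last by apply: eqv_scaleA; typing.
apply: eqv_scale.
via (Y ∘ W^[n] a ∘ c); first by apply: eqv_compA; typing.
via (W^[n] a ∘ Y ∘ c); first by apply: eqv_compr; [typing | apply: eqv_sym; apply: endpow_commute].
via (W^[n] a ∘ (Y ∘ c)); first by apply: eqv_sym; apply: eqv_compA; typing.
via (W^[n] a ∘ Tscale s (W ∘ c)); first by apply: (eqv_compl _ Yc); typing.
via (Tscale s (W^[n] a ∘ (W ∘ c))); first by apply: eqv_compZr; typing.
apply: eqv_scale; via (W^[n] a ∘ W ∘ c); first by apply: eqv_compA; typing.
by apply: eqv_compr; [typing | apply: eqv_sym; apply: endpowSr].
Qed.

End SkewCommutation.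

Lemma typed_xi n i : (i < n)%N -> typed (xi K n i) n n.
Proof. by move=> Hi; rewrite /xi; typing. Qed.

Lemma typed_power_sum r n : typed (power_sum K r n) n n.
Proof.
apply: typed_sum => i; rewrite mem_iota => /andP[_ Hi].
by apply: typed_endpow; apply: typed_xi.
Qed.

Lemma xi_tens_id a b i : (i < a)%N -> xi K (a + b) i ≡[a + b, a + b] xi K a i ⊗ Id b.
Proof.
move=> Hi; rewrite /xi (_ : (a + b - i.+1 = a - i.+1 + b)%N); last by lia.
apply: eqv_sym; via (Id i ⊗ x ⊗ (Id (a - i.+1) ⊗ Id b)); first by apply: tensA; typing.
by apply: eqv_tensl; [typing | apply: tens_id | ..]; typing.
Qed.

Lemma xi_id_tens a b j : (j < b)%N -> xi K (a + b) (a + j) ≡[a + b, a + b] Id a ⊗ xi K b j.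
Proof.
move=> Hj; rewrite /xi (_ : (a + b - (a + j).+1 = b - j.+1)%N); last by lia.
via (Id a ⊗ Id j ⊗ x ⊗ Id (b - j.+1)).
  apply: (@eqv_tensr _ _ (a + j + 1) (a + j + 1)); [typing | | arith | arith].
  by apply: eqv_tensr; [typing | apply: eqv_sym; apply: tens_id | ..]; typing.
via (Id a ⊗ (Id j ⊗ x) ⊗ Id (b - j.+1)).
  by apply: (@eqv_tensr _ _ (a + j + 1) (a + j + 1)); [typing | apply: tensA; typing | ..]; typing.
by apply: tensA; typing.
Qed.

Lemma power_sum_tens r a b :
  power_sum K r (a + b) ≡[a + b, a + b] power_sum K r a ⊗ Id b ⊕ Id a ⊗ power_sum K r b.
Proof.
have typed_xi_pow n i : (i < n)%N -> typed ((xi K n i)^[n] r) n n.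
  by move=> Hi; apply: typed_endpow; apply: typed_xi.
rewrite /power_sum iotaD add0n.
via (Σ_(i <- iota 0 a) (xi K (a + b) i)^[a + b] r
     ⊕ Σ_(i <- iota a b) (xi K (a + b) i)^[a + b] r).
  by apply: sum_cat => i; rewrite mem_cat !mem_iota => /orP[] /andP[_ Hi]; apply: typed_xi_pow; lia.
apply: eqv_add.
  via (Σ_(i <- iota 0 a) ((xi K a i)^[a] r ⊗ Id b)).
    apply: eqv_sum => i; rewrite mem_iota => /andP[_ Hi].
    via ((xi K a i ⊗ Id b)^[a + b] r); first exact/eqv_endpow/xi_tens_id.
    by apply: endpow_tens_id; apply: typed_xi.
  apply: eqv_sym; apply: tens_suml; last by typing.
  by move=> i; rewrite mem_iota => /andP[_ Hi]; apply: typed_xi_pow.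
rewrite (_ : iota a b = map (addn a) (iota 0 b)); last by rewrite -iotaDl addn0.
rewrite -map_comp.
via (Σ_(i <- iota 0 b) (Id a ⊗ (xi K b i)^[b] r)).
  apply: eqv_sum => i; rewrite mem_iota => /andP[_ Hi] /=.
  via ((Id a ⊗ xi K b i)^[a + b] r); first exact/eqv_endpow/xi_id_tens.
  by apply: endpow_id_tens; apply: typed_xi.
apply: eqv_sym; apply: tens_sumr; first by typing.
by move=> i; rewrite mem_iota => /andP[_ Hi]; apply: typed_xi_pow.
Qed.

(** * Power sums and centrality *)

Section Centrality.
Variable r : nat.
Local Notation P n := (power_sum K r n).
Local Hint Resolve typed_power_sum : core.

Definition central (f : term) n m := P m ∘ f ≡[n, m] f ∘ P n.

Lemma central_id n : central (Id n) n n.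
Proof. by via (P n); [apply: eqv_idr | apply: eqv_sym; apply: eqv_idl]. Qed.

Lemma central_zero n m : central zero n m.
Proof. by via (zero); [apply: comp0r | apply: eqv_sym; apply: comp0l]. Qed.

Lemma central_comp n m p (g f : term) : typed g m p -> typed f n m ->
  central g m p -> central f n m -> central (g ∘ f) n p.
Proof.
rewrite /central => Hg Hf Cg Cf.
via (P p ∘ g ∘ f); first by apply: eqv_compA; typing.
via (g ∘ P m ∘ f); first exact: eqv_compr Hf Cg.
via (g ∘ (P m ∘ f)); first by apply: eqv_sym; apply: eqv_compA; typing.
via (g ∘ (f ∘ P n)); first exact: eqv_compl Hg Cf.
by apply: eqv_compA; typing.
Qed.

Lemma central_add n m (f g : term) : typed f n m -> typed g n m ->
  central f n m -> central g n m -> central (f ⊕ g) n m.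
Proof.
rewrite /central => Hf Hg Cf Cg.
via (P m ∘ f ⊕ P m ∘ g); first by apply: (@eqv_compDr _ _ n m m); typing.
via (f ∘ P n ⊕ g ∘ P n); first exact: eqv_add.
by apply: eqv_sym; apply: (@eqv_compDl _ _ n n m); typing.
Qed.

Lemma central_scale n m a (f : term) : typed f n m ->
  central f n m -> central (Tscale a f) n m.
Proof.
rewrite /central => Hf Cf.
via (Tscale a (P m ∘ f)); first by apply: (@eqv_compZr _ _ n m m); typing.
via (Tscale a (f ∘ P n)); first exact: eqv_scale.
by apply: eqv_sym; apply: (@eqv_compZl _ _ n n m); typing.
Qed.

Lemma power_sum_comp_tens n1 m1 n2 m2 (f g : term) : typed f n1 m1 -> typed g n2 m2 ->
  P (m1 + m2) ∘ (f ⊗ g) ≡[n1 + n2, m1 + m2] (P m1 ∘ f) ⊗ g ⊕ f ⊗ (P m2 ∘ g).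
Proof.
move=> Hf Hg.
via ((P m1 ⊗ Id m2 ⊕ Id m1 ⊗ P m2) ∘ (f ⊗ g)).
  by apply: eqv_compr; [typing | apply: power_sum_tens].
via ((P m1 ⊗ Id m2) ∘ (f ⊗ g) ⊕ (Id m1 ⊗ P m2) ∘ (f ⊗ g)).
  by apply: (@eqv_compDl _ _ (n1 + n2) (m1 + m2) (m1 + m2)); typing.
apply: eqv_add.
  via ((P m1 ∘ f) ⊗ (Id m2 ∘ g)); first by apply: interchange; typing.
  by apply: eqv_tensl; [typing | apply: eqv_idl | ..]; typing.
via ((Id m1 ∘ f) ⊗ (P m2 ∘ g)); first by apply: interchange; typing.
by apply: eqv_tensr; [typing | apply: eqv_idl | ..]; typing.
Qed.

Lemma tens_comp_power_sum n1 m1 n2 m2 (f g : term) : typed f n1 m1 -> typed g n2 m2 ->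
  (f ⊗ g) ∘ P (n1 + n2) ≡[n1 + n2, m1 + m2] (f ∘ P n1) ⊗ g ⊕ f ⊗ (g ∘ P n2).
Proof.
move=> Hf Hg.
via ((f ⊗ g) ∘ (P n1 ⊗ Id n2 ⊕ Id n1 ⊗ P n2)).
  by apply: eqv_compl; [typing | apply: power_sum_tens].
via ((f ⊗ g) ∘ (P n1 ⊗ Id n2) ⊕ (f ⊗ g) ∘ (Id n1 ⊗ P n2)).
  by apply: (@eqv_compDr _ _ (n1 + n2) (n1 + n2) (m1 + m2)); typing.
apply: eqv_add.
  via ((f ∘ P n1) ⊗ (g ∘ Id n2)); first by apply: interchange; typing.
  by apply: eqv_tensl; [typing | apply: eqv_idr | ..]; typing.
via ((f ∘ Id n1) ⊗ (g ∘ P n2)); first by apply: interchange; typing.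
by apply: eqv_tensr; [typing | apply: eqv_idr | ..]; typing.
Qed.

Lemma central_tens n1 m1 n2 m2 (f g : term) : typed f n1 m1 -> typed g n2 m2 ->
  central f n1 m1 -> central g n2 m2 -> central (f ⊗ g) (n1 + n2) (m1 + m2).
Proof.
rewrite /central => Hf Hg Cf Cg.
via ((P m1 ∘ f) ⊗ g ⊕ f ⊗ (P m2 ∘ g)); first exact: power_sum_comp_tens.
via ((f ∘ P n1) ⊗ g ⊕ f ⊗ (g ∘ P n2)); last by apply: eqv_sym; apply: tens_comp_power_sum.
by apply: eqv_add; [apply: (eqv_tensr Hg Cf) | apply: (eqv_tensl Hf Cg)]; typing.
Qed.

End Centrality.

(** * Dots, cups and caps *)

Local Notation x1 := (x ⊗ I).
Local Notation x2 := (I ⊗ x).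
Local Notation lbend g := ((cap ⊗ I) ∘ (I ⊗ g)).
Local Notation unbend n w := ((I ⊗ w) ∘ (cup ⊗ Id n)).

Lemma lbend_x2_cup : lbend (x2 ∘ cup) ≡[1, 1] x.
Proof.
via ((cap ⊗ I) ∘ ((I ⊗ x2) ∘ (I ⊗ cup))).
  by apply: eqv_compl; [typing | apply: id_tens_comp; typing].
via ((cap ⊗ I) ∘ (I ⊗ x2) ∘ (I ⊗ cup)); first by apply: eqv_compA; typing.
via (x ∘ (cap ⊗ I) ∘ (I ⊗ cup)).
  apply: eqv_compr; first by typing.
  via ((cap ⊗ I) ∘ (Id 2 ⊗ x)).
    apply: eqv_compl; first by typing.
    via (I ⊗ I ⊗ x); first by apply: eqv_sym; apply: tensA; typing.
    by apply: eqv_tensr; [typing | apply: tens_id | ..]; typing.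
  via (cap ⊗ x); first by apply: tens_split_lr; typing.
  via ((Id 0 ⊗ x) ∘ (cap ⊗ I)); first by apply: eqv_sym; apply: tens_split_rl; typing.
  by apply: eqv_compr; [typing | apply: eqv_tens1l; typing].
via (x ∘ ((cap ⊗ I) ∘ (I ⊗ cup))); first by apply: eqv_sym; apply: eqv_compA; typing.
via (x ∘ I); first by apply: eqv_compl; [typing | apply: nb_zigzag1].
by apply: eqv_idr; typing.
Qed.

Lemma lbend_x1_cup : lbend (x1 ∘ cup) ≡[1, 1] ⊖ x.
Proof.
via ((cap ⊗ I) ∘ ((I ⊗ x1) ∘ (I ⊗ cup))).
  by apply: eqv_compl; [typing | apply: id_tens_comp; typing].
via ((cap ⊗ I) ∘ (I ⊗ x1) ∘ (I ⊗ cup)); first by apply: eqv_compA; typing.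
via ((⊖ ((cap ⊗ I) ∘ (x1 ⊗ I))) ∘ (I ⊗ cup)).
  apply: eqv_compr; first by typing.
  via ((cap ⊗ I) ∘ (x2 ⊗ I)).
    by apply: eqv_compl; [typing | apply: eqv_sym; apply: tensA; typing].
  via ((cap ∘ x2) ⊗ (I ∘ I)); first by apply: interchange; typing.
  via ((⊖ (cap ∘ x1)) ⊗ I).
    by apply: eqv_tensE; [apply: nb_capdot | apply: eqv_idl | ..]; typing.
  via (⊖ ((cap ∘ x1) ⊗ I)); first by apply: tensZl; typing.
  by apply: eqv_scale; apply: comp_tens_id; typing.
via (⊖ ((cap ⊗ I) ∘ (x1 ⊗ I) ∘ (I ⊗ cup))); first by apply: eqv_compZl; typing.
apply: eqv_scale.
via ((cap ⊗ I) ∘ ((x1 ⊗ I) ∘ (I ⊗ cup))); first by apply: eqv_sym; apply: eqv_compA; typing.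
via ((cap ⊗ I) ∘ ((I ⊗ cup) ∘ x)).
  apply: eqv_compl; first by typing.
  via ((x ⊗ Id 2) ∘ (I ⊗ cup)).
    apply: eqv_compr; first by typing.
    via (x ⊗ (I ⊗ I)); first by apply: tensA; typing.
    by apply: eqv_tensl; [typing | apply: tens_id | ..]; typing.
  via (x ⊗ cup); first by apply: tens_split_lr; typing.
  via ((I ⊗ cup) ∘ (x ⊗ Id 0)); first by apply: eqv_sym; apply: tens_split_rl; typing.
  by apply: eqv_compl; [typing | apply: eqv_tens1r; typing].
via ((cap ⊗ I) ∘ (I ⊗ cup) ∘ x); first by apply: eqv_compA; typing.
via (I ∘ x); first by apply: eqv_compr; [typing | apply: nb_zigzag1].
by apply: eqv_idl; typing.
Qed.

Lemma zigzag_tens : (I ⊗ (cap ⊗ I)) ∘ (cup ⊗ Id 2) ≡[2, 2] Id 2.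
Proof.
via ((I ⊗ cap ⊗ I) ∘ (cup ⊗ I ⊗ I)).
  apply: eqv_comp; first by apply: eqv_sym; apply: tensA; typing.
  via (cup ⊗ (I ⊗ I)).
    by apply: eqv_tensl; [typing | apply: eqv_sym; apply: tens_id | ..]; typing.
  by apply: eqv_sym; apply: tensA; typing.
via (((I ⊗ cap) ∘ (cup ⊗ I)) ⊗ (I ∘ I)); first by apply: interchange; typing.
via (I ⊗ I); first by apply: eqv_tensE; [apply: nb_zigzag2 | apply: eqv_idl | ..]; typing.
exact: tens_id.
Qed.

Lemma unbend_lbend n (g : term) : typed g n 2 -> unbend n (lbend g) ≡[n, 2] g.
Proof.
move=> Hg.
via ((I ⊗ (cap ⊗ I)) ∘ (I ⊗ (I ⊗ g)) ∘ (cup ⊗ Id n)).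
  by apply: eqv_compr; [typing | apply: id_tens_comp; typing].
via ((I ⊗ (cap ⊗ I)) ∘ ((I ⊗ (I ⊗ g)) ∘ (cup ⊗ Id n))).
  by apply: eqv_sym; apply: eqv_compA; typing.
via ((I ⊗ (cap ⊗ I)) ∘ ((cup ⊗ Id 2) ∘ g)).
  apply: eqv_compl; first by typing.
  via ((I ⊗ I ⊗ g) ∘ (cup ⊗ Id n)).
    by apply: eqv_compr; [typing | apply: eqv_sym; apply: tensA; typing].
  via ((I ⊗ I ∘ cup) ⊗ (g ∘ Id n)); first by apply: interchange; typing.
  via (cup ⊗ g).
    apply: (@eqv_tensE _ _ 0 2 n 2); [| apply: eqv_idr; typing | arith | arith].
    via (Id 2 ∘ cup); last by apply: eqv_idl; typing.
    by apply: eqv_compr; [typing | apply: tens_id].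
  via ((cup ⊗ Id 2) ∘ (Id 0 ⊗ g)); first by apply: eqv_sym; apply: tens_split_lr; typing.
  by apply: eqv_compl; [typing | apply: eqv_tens1l].
via ((I ⊗ (cap ⊗ I)) ∘ (cup ⊗ Id 2) ∘ g); first by apply: eqv_compA; typing.
via (Id 2 ∘ g); first by apply: eqv_compr; [typing | apply: zigzag_tens].
exact: eqv_idl.
Qed.

Lemma x1_cup : x1 ∘ cup ≡[0, 2] ⊖ (x2 ∘ cup).
Proof.
via (unbend 0 (lbend (x1 ∘ cup))); first by apply: eqv_sym; apply: unbend_lbend; typing.
via (unbend 0 (⊖ x)).
  by apply: eqv_compr; [typing | apply: eqv_tensl; [typing | apply: lbend_x1_cup | ..]]; typing.
via ((⊖ x2) ∘ (cup ⊗ Id 0)); first by apply: eqv_compr; [typing | apply: tensZr]; typing.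
via (⊖ unbend 0 x); first by apply: eqv_compZl; typing.
apply: eqv_scale; via (unbend 0 (lbend (x2 ∘ cup))); last by apply: unbend_lbend; typing.
apply: eqv_compr; first by typing.
by apply: eqv_tensl; [typing | apply: eqv_sym; apply: lbend_x2_cup | ..]; typing.
Qed.

Lemma x1_x2_commute : x1 ∘ x2 ≡[2, 2] x2 ∘ x1.
Proof. by via (x ⊗ x); [apply: tens_split_lr | apply: eqv_sym; apply: tens_split_rl]; typing. Qed.

Lemma x1_pow a : x1^[2] a ≡[2, 2] x^[1] a ⊗ I.
Proof. by apply: (@endpow_tens_id 1 1); typing. Qed.

Lemma x2_pow a : x2^[2] a ≡[2, 2] I ⊗ x^[1] a.
Proof. by apply: (@endpow_id_tens 1 1); typing. Qed.

Lemma x1_pow_x2_pow a b : x1^[2] a ∘ x2^[2] b ≡[2, 2] x^[1] a ⊗ x^[1] b.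
Proof.
via ((x^[1] a ⊗ I) ∘ (I ⊗ x^[1] b)); first by apply: eqv_comp; [apply: x1_pow | apply: x2_pow].
by apply: tens_split_lr; typing.
Qed.

Lemma x2_pow_x1_pow a b : x2^[2] b ∘ x1^[2] a ≡[2, 2] x^[1] a ⊗ x^[1] b.
Proof.
via ((I ⊗ x^[1] b) ∘ (x^[1] a ⊗ I)); first by apply: eqv_comp; [apply: x2_pow | apply: x1_pow].
by apply: tens_split_rl; typing.
Qed.

Lemma cap_x2_pow b : cap ∘ x2^[2] b ≡[2, 0] Tscale ((-1) ^+ b) (cap ∘ x1^[2] b).
Proof.
by apply: comp_endpow_skew; try typing; [apply: x1_x2_commute | apply: nb_capdot].
Qed.

Lemma x1_pow_cup a : x1^[2] a ∘ cup ≡[0, 2] Tscale ((-1) ^+ a) (x2^[2] a ∘ cup).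
Proof.
apply: endpow_comp_skew; try typing; last exact: x1_cup.
by apply: eqv_sym; apply: x1_x2_commute.
Qed.

Section PowerSumsInLowRank.
Variable r : nat.
Local Notation P n := (power_sum K r n).

Lemma power_sum1 : P 1 ≡[1, 1] x^[1] r.
Proof.
via ((xi K 1 0)^[1] r); first by apply: eqv_addr0; apply: typed_endpow; apply: typed_xi.
apply: eqv_endpow; rewrite /xi.
by via (Id 0 ⊗ x); [apply: eqv_tens1r | apply: eqv_tens1l]; typing.
Qed.

Lemma power_sum2 : P 2 ≡[2, 2] x1^[2] r ⊕ x2^[2] r.
Proof.
via ((xi K 2 0)^[2] r ⊕ (xi K 2 1)^[2] r).
  by apply: eqv_add; [apply: (eqv_refl t) | apply: eqv_addr0]; apply: typed_endpow; apply: typed_xi.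
apply: eqv_add; apply: eqv_endpow; rewrite /xi; last by apply: eqv_tens1r; typing.
by apply: eqv_tensr; [typing | apply: eqv_tens1l | ..]; typing.
Qed.

Lemma central_x : central r x 1 1.
Proof.
via (x^[1] r ∘ x); first by apply: eqv_compr; [typing | apply: power_sum1].
via (x ∘ x^[1] r); first by apply: eqv_sym; apply: endpowSr; typing.
by apply: eqv_compl; [typing | apply: eqv_sym; apply: power_sum1].
Qed.

Hypothesis r_odd : odd r.

Lemma sign_odd : (-1) ^+ r = -1 :> K.
Proof. by rewrite -signr_odd r_odd expr1. Qed.

Lemma central_cap : central r cap 2 0.
Proof.
via (zero); first exact: comp0l (ty_cap K).
apply: eqv_sym; via (cap ∘ (x1^[2] r ⊕ x2^[2] r)).
  by apply: eqv_compl; [typing | apply: power_sum2].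
via (cap ∘ x1^[2] r ⊕ cap ∘ x2^[2] r); first by apply: (@eqv_compDr _ _ 2 2 0); typing.
via (cap ∘ x1^[2] r ⊖ cap ∘ x1^[2] r); last by apply: eqv_subrr; typing.
by apply: eqv_add; [refl | rewrite -sign_odd; apply: cap_x2_pow].
Qed.

Lemma central_cup : central r cup 0 2.
Proof.
apply: eqv_sym; via (zero); first exact: comp0r (ty_cup K).
apply: eqv_sym; via ((x1^[2] r ⊕ x2^[2] r) ∘ cup).
  by apply: eqv_compr; [typing | apply: power_sum2].
via (x1^[2] r ∘ cup ⊕ x2^[2] r ∘ cup); first by apply: (@eqv_compDl _ _ 0 2 2); typing.
via (⊖ (x2^[2] r ∘ cup) ⊕ x2^[2] r ∘ cup).
  by apply: eqv_add; [rewrite -sign_odd; apply: x1_pow_cup | refl].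
by via (x2^[2] r ∘ cup ⊖ x2^[2] r ∘ cup); [apply: eqv_addC | apply: eqv_subrr]; typing.
Qed.

End PowerSumsInLowRank.

(** * The crossing *)

Local Notation rbend g := ((I ⊗ cap) ∘ (g ⊗ I)).
Local Notation cc := (cup ∘ cap).

Lemma rbend_x1_tau : rbend (x1 ∘ τ) ≡[3, 1] lbend (x2 ∘ τ).
Proof.
via ((I ⊗ cap) ∘ ((x1 ⊗ I) ∘ (τ ⊗ I))).
  by apply: eqv_compl; [typing | apply: comp_tens_id; typing].
via ((I ⊗ cap) ∘ (x1 ⊗ I) ∘ (τ ⊗ I)); first by apply: eqv_compA; typing.
via (x ∘ (I ⊗ cap) ∘ (τ ⊗ I)).
  apply: eqv_compr; first by typing.
  via ((I ⊗ cap) ∘ (x ⊗ Id 2)).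
    apply: eqv_compl; first by typing.
    via (x ⊗ (I ⊗ I)); first by apply: tensA; typing.
    by apply: eqv_tensl; [typing | apply: tens_id | ..]; typing.
  via (x ⊗ cap); first by apply: tens_split_rl; typing.
  via ((x ⊗ Id 0) ∘ (I ⊗ cap)); first by apply: eqv_sym; apply: tens_split_lr; typing.
  by apply: eqv_compr; [typing | apply: eqv_tens1r; typing].
via (x ∘ rbend τ); first by apply: eqv_sym; apply: eqv_compA; typing.
via (x ∘ lbend τ); first by apply: eqv_compl; [typing | apply: nb_capslide].
via (x ∘ (cap ⊗ I) ∘ (I ⊗ τ)); first by apply: eqv_compA; typing.
via ((cap ⊗ I) ∘ (I ⊗ x2) ∘ (I ⊗ τ)).
  apply: eqv_compr; first by typing.
  via ((Id 0 ⊗ x) ∘ (cap ⊗ I)).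
    by apply: eqv_compr; [typing | apply: eqv_sym; apply: eqv_tens1l; typing].
  via (cap ⊗ x); first by apply: tens_split_rl; typing.
  via ((cap ⊗ I) ∘ (Id 2 ⊗ x)); first by apply: eqv_sym; apply: tens_split_lr; typing.
  apply: eqv_compl; first by typing.
  via (I ⊗ I ⊗ x).
    by apply: eqv_tensr; [typing | apply: eqv_sym; apply: tens_id | ..]; typing.
  by apply: tensA; typing.
via ((cap ⊗ I) ∘ ((I ⊗ x2) ∘ (I ⊗ τ))); first by apply: eqv_sym; apply: eqv_compA; typing.
by apply: eqv_compl; [typing | apply: eqv_sym; apply: id_tens_comp; typing].
Qed.

Lemma rbend_tau_x2 : rbend (τ ∘ x2) ≡[3, 1] lbend (τ ∘ x1).
Proof.
via ((I ⊗ cap) ∘ ((τ ⊗ I) ∘ (x2 ⊗ I))).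
  by apply: eqv_compl; [typing | apply: comp_tens_id; typing].
via (rbend τ ∘ (x2 ⊗ I)); first by apply: eqv_compA; typing.
via (lbend τ ∘ (x2 ⊗ I)); first by apply: eqv_compr; [typing | apply: nb_capslide].
via ((cap ⊗ I) ∘ ((I ⊗ τ) ∘ (x2 ⊗ I))); first by apply: eqv_sym; apply: eqv_compA; typing.
apply: eqv_compl; first by typing.
via ((I ⊗ τ) ∘ (I ⊗ x1)); first by apply: eqv_compl; [typing | apply: tensA; typing].
by apply: eqv_sym; apply: id_tens_comp; typing.
Qed.

Lemma rbend_id : rbend (I ⊗ I) ≡[3, 1] I ⊗ cap.
Proof.
via ((I ⊗ cap) ∘ Id 3); last by apply: eqv_idr; typing.
apply: eqv_compl; first by typing.
via (Id 2 ⊗ I); first by apply: eqv_tensr; [typing | apply: tens_id | ..]; typing.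
exact: tens_id.
Qed.

Lemma rbend_cup_cap : rbend cc ≡[3, 1] cap ⊗ I.
Proof.
via ((I ⊗ cap) ∘ ((cup ⊗ I) ∘ (cap ⊗ I))).
  by apply: eqv_compl; [typing | apply: comp_tens_id; typing].
via ((I ⊗ cap) ∘ (cup ⊗ I) ∘ (cap ⊗ I)); first by apply: eqv_compA; typing.
via (I ∘ (cap ⊗ I)); first by apply: eqv_compr; [typing | apply: nb_zigzag2].
by apply: eqv_idl; typing.
Qed.

Lemma rbend_sub (f g : term) : typed f 2 2 -> typed g 2 2 ->
  rbend (f ⊖ g) ≡[3, 1] rbend f ⊖ rbend g.
Proof.
move=> Hf Hg.
via ((I ⊗ cap) ∘ (f ⊗ I ⊖ g ⊗ I)).
  apply: eqv_compl; first by typing.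
  via (f ⊗ I ⊕ (⊖ g) ⊗ I); first by apply: tensDl; typing.
  by apply: eqv_add; [refl | apply: tensZl; typing].
via (rbend f ⊕ (I ⊗ cap) ∘ ⊖ (g ⊗ I)); first by apply: (@eqv_compDr _ _ 3 3 1); typing.
by apply: eqv_add; [refl | apply: (@eqv_compZr _ _ 3 3 1); typing].
Qed.

Lemma unbend_sub (v w : term) : typed v 3 1 -> typed w 3 1 ->
  unbend 2 (v ⊖ w) ≡[2, 2] unbend 2 v ⊖ unbend 2 w.
Proof.
move=> Hv Hw.
via ((I ⊗ v ⊖ I ⊗ w) ∘ (cup ⊗ Id 2)).
  apply: eqv_compr; first by typing.
  via (I ⊗ v ⊕ I ⊗ ⊖ w); first by apply: tensDr; typing.
  by apply: eqv_add; [refl | apply: tensZr; typing].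
via (unbend 2 v ⊕ (⊖ (I ⊗ w)) ∘ (cup ⊗ Id 2)); first by apply: (@eqv_compDl _ _ 2 4 2); typing.
by apply: eqv_add; [refl | apply: (@eqv_compZl _ _ 2 4 2); typing].
Qed.

Lemma unbend_id_cap : unbend 2 (I ⊗ cap) ≡[2, 2] cc.
Proof.
via ((I ⊗ I ⊗ cap) ∘ (cup ⊗ Id 2)).
  by apply: eqv_compr; [typing | apply: eqv_sym; apply: tensA; typing].
via ((I ⊗ I ∘ cup) ⊗ (cap ∘ Id 2)); first by apply: interchange; typing.
via (cup ⊗ cap).
  apply: (@eqv_tensE _ _ 0 2 2 0); [| apply: eqv_idr; typing | arith | arith].
  via (Id 2 ∘ cup); last by apply: eqv_idl; typing.
  by apply: eqv_compr; [typing | apply: tens_id].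
via ((cup ⊗ Id 0) ∘ (Id 0 ⊗ cap)); first by apply: eqv_sym; apply: tens_split_lr; typing.
by apply: eqv_comp; [apply: eqv_tens1r | apply: eqv_tens1l]; typing.
Qed.

(* Bending [nb_dot] with a cap, which [nb_capslide] lets the crossing pass
   through, yields the relation for a dot on the right strand. *)
Lemma lbend_dot : lbend (x2 ∘ τ) ⊖ lbend (τ ∘ x1) ≡[3, 1] I ⊗ cap ⊖ cap ⊗ I.
Proof.
via (rbend (x1 ∘ τ) ⊖ rbend (τ ∘ x2)).
  apply: eqv_add; last apply: eqv_scale; apply: eqv_sym.
    exact: rbend_x1_tau.
  exact: rbend_tau_x2.
via (rbend (x1 ∘ τ ⊖ τ ∘ x2)); first by apply: eqv_sym; apply: rbend_sub; typing.
via (rbend (I ⊗ I ⊖ cc)).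
  by apply: eqv_compl; [typing | apply: eqv_tensr; [typing | apply: nb_dot | ..]]; typing.
via (rbend (I ⊗ I) ⊖ rbend cc); first by apply: rbend_sub; typing.
by apply: eqv_add; [apply: rbend_id | apply: eqv_scale; apply: rbend_cup_cap].
Qed.

Lemma x2_tau : x2 ∘ τ ⊖ τ ∘ x1 ≡[2, 2] cc ⊖ I ⊗ I.
Proof.
via (unbend 2 (lbend (x2 ∘ τ)) ⊖ unbend 2 (lbend (τ ∘ x1))).
  by apply: eqv_add; [| apply: eqv_scale]; apply: eqv_sym; apply: unbend_lbend; typing.
via (unbend 2 (lbend (x2 ∘ τ) ⊖ lbend (τ ∘ x1))).
  by apply: eqv_sym; apply: unbend_sub; typing.
via (unbend 2 (I ⊗ cap ⊖ cap ⊗ I)).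
  by apply: eqv_compr; [typing | apply: eqv_tensl; [typing | apply: lbend_dot | ..]]; typing.
via (unbend 2 (I ⊗ cap) ⊖ unbend 2 (cap ⊗ I)); first by apply: unbend_sub; typing.
apply: eqv_add; first exact: unbend_id_cap.
apply: eqv_scale; via (Id 2); first exact: zigzag_tens.
by apply: eqv_sym; apply: tens_id.
Qed.

Definition slide_sum n m (Y M W : term) k :=
  Σ_(a <- iota 0 k) (Y^[m] a ∘ (M ∘ W^[n] (k - a.+1))).

Section Sliding.
Variables (n m : nat) (Y M W : term).
Hypotheses (HY : typed Y m m) (HM : typed M n m) (HW : typed W n n).

Lemma typed_slide_sum k : typed (slide_sum n m Y M W k) n m.
Proof. by apply: typed_sum => a _; typing. Qed.

Local Hint Resolve typed_slide_sum : core.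

Lemma slide_sumS k :
  slide_sum n m Y M W k.+1 ≡[n, m] M ∘ W^[n] k ⊕ Y ∘ slide_sum n m Y M W k.
Proof.
rewrite /slide_sum /= subSS subn0; apply: eqv_add; first by apply: eqv_idl; typing.
rewrite -[1%N]addn0 iotaDl -map_comp.
via (Σ_(a <- iota 0 k) (Y ∘ (Y^[m] a ∘ (M ∘ W^[n] (k - a.+1))))).
  by apply: eqv_sum => a _ /=; rewrite subSS; apply: eqv_sym; apply: eqv_compA; typing.
by apply: eqv_sym; apply: (comp_sumr HY) => a _; typing.
Qed.

Lemma endpow_slide (g : term) k : typed g n m -> Y ∘ g ≡[n, m] g ∘ W ⊕ M ->
  Y^[m] k ∘ g ≡[n, m] g ∘ W^[n] k ⊕ slide_sum n m Y M W k.
Proof.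
move=> Hg Yg.
elim: k => [|k IH] /=.
  via g; first by apply: eqv_idl.
  by via (g ∘ Id n); [apply: eqv_sym; apply: eqv_idr | apply: eqv_sym; apply: eqv_addr0; typing].
via (Y ∘ (Y^[m] k ∘ g)); first by apply: eqv_sym; apply: eqv_compA; typing.
via (Y ∘ (g ∘ W^[n] k ⊕ slide_sum n m Y M W k)); first exact: eqv_compl HY IH.
via (Y ∘ (g ∘ W^[n] k) ⊕ Y ∘ slide_sum n m Y M W k).
  by apply: (@eqv_compDr _ _ n m m); typing.
via (g ∘ W^[n] k.+1 ⊕ M ∘ W^[n] k ⊕ Y ∘ slide_sum n m Y M W k).
  apply: eqv_add; last by refl.
  via (Y ∘ g ∘ W^[n] k); first by apply: eqv_compA; typing.
  via ((g ∘ W ⊕ M) ∘ W^[n] k); first by apply: (eqv_compr _ Yg); typing.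
  via (g ∘ W ∘ W^[n] k ⊕ M ∘ W^[n] k); first by apply: (@eqv_compDl _ _ n n m); typing.
  by apply: eqv_add; [apply: eqv_sym; apply: (@eqv_compA K t n n n m g W (W^[n] k)) | refl]; typing.
via (g ∘ W^[n] k.+1 ⊕ (M ∘ W^[n] k ⊕ Y ∘ slide_sum n m Y M W k)).
  by apply: eqv_sym; apply: eqv_addA; typing.
by apply: eqv_add; [refl | apply: eqv_sym; apply: slide_sumS].
Qed.

Lemma slide_sum_sub (M' : term) k : typed M' n m ->
  slide_sum n m Y (M ⊖ M') W k ≡[n, m] slide_sum n m Y M W k ⊖ slide_sum n m Y M' W k.
Proof.
move=> HM'; rewrite /slide_sum.
have dist a : Y^[m] a ∘ ((M ⊖ M') ∘ W^[n] (k - a.+1))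
    ≡[n, m] Y^[m] a ∘ (M ∘ W^[n] (k - a.+1)) ⊖ Y^[m] a ∘ (M' ∘ W^[n] (k - a.+1)).
  via (Y^[m] a ∘ (M ∘ W^[n] (k - a.+1) ⊖ M' ∘ W^[n] (k - a.+1))).
    apply: eqv_compl; first by typing.
    via (M ∘ W^[n] (k - a.+1) ⊕ (⊖ M') ∘ W^[n] (k - a.+1)).
      by apply: (@eqv_compDl _ _ n n m); typing.
    by apply: eqv_add; [refl | apply: (@eqv_compZl _ _ n n m); typing].
  via (Y^[m] a ∘ (M ∘ W^[n] (k - a.+1)) ⊕ Y^[m] a ∘ ⊖ (M' ∘ W^[n] (k - a.+1))).
    by apply: (@eqv_compDr _ _ n m m); typing.
  by apply: eqv_add; [refl | apply: (@eqv_compZr _ _ n m m); typing].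
via (Σ_(a <- iota 0 k) (Y^[m] a ∘ (M ∘ W^[n] (k - a.+1)) ⊖ Y^[m] a ∘ (M' ∘ W^[n] (k - a.+1)))).
  by apply: eqv_sum => a _; apply: dist.
by apply: sumB => a _; typing.
Qed.

End Sliding.

Lemma subr_add_subr n m (a b : term) : typed a n m -> typed b n m ->
  (a ⊖ b) ⊕ (b ⊖ a) ≡[n, m] zero.
Proof.
move=> Ha Hb; via ((a ⊕ b) ⊕ (⊖ b ⊕ ⊖ a)); first by apply: eqv_addrACA; typing.
via ((a ⊕ b) ⊖ (a ⊕ b)); last by apply: eqv_subrr; typing.
apply: eqv_add; first by refl.
via (⊖ a ⊕ ⊖ b); first by apply: eqv_addC; typing.
by apply: eqv_sym; apply: eqv_scaleDr.
Qed.

Lemma slide_sum_id_swap k :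
  slide_sum 2 2 x1 (I ⊗ I) x2 k ≡[2, 2] slide_sum 2 2 x2 (I ⊗ I) x1 k.
Proof.
have drop_id (A B : term) : typed A 2 2 -> typed B 2 2 -> A ∘ ((I ⊗ I) ∘ B) ≡[2, 2] A ∘ B.
  move=> HA HB; apply: (eqv_compl HA); via (Id 2 ∘ B); last exact: eqv_idl.
  by apply: (eqv_compr HB); apply: tens_id.
pose G i := x^[1] i ⊗ x^[1] (k - i.+1).
via (Σ_(a <- iota 0 k) G a).
  apply: eqv_sum => a _; via (x1^[2] a ∘ x2^[2] (k - a.+1)); first by apply: drop_id; typing.
  exact: x1_pow_x2_pow.
apply: eqv_sym; via (Σ_(a <- rev (iota 0 k)) G a);
  last by apply: sum_rev => a _; rewrite /G; typing.
rewrite rev_iota0 -map_comp; apply: eqv_sum => a; rewrite mem_iota => /andP[_ Ha] /=.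
via (x2^[2] a ∘ x1^[2] (k - a.+1)); first by apply: drop_id; typing.
by rewrite /G (_ : (k - (k - a.+1).+1 = a)%N); [apply: x2_pow_x1_pow | lia].
Qed.

Lemma cup_cap_swap a b : ~~ odd (a + b) ->
  x1^[2] a ∘ (cc ∘ x2^[2] b) ≡[2, 2] x2^[2] a ∘ (cc ∘ x1^[2] b).
Proof.
move=> ab_even.
have regroup (A B : term) : typed A 2 2 -> typed B 2 2 ->
    A ∘ (cc ∘ B) ≡[2, 2] (A ∘ cup) ∘ (cap ∘ B).
  move=> HA HB; via (A ∘ (cup ∘ (cap ∘ B))); last by apply: eqv_compA; typing.
  by apply: eqv_compl; [typing | apply: eqv_sym; apply: eqv_compA; typing].
via ((x1^[2] a ∘ cup) ∘ (cap ∘ x2^[2] b)); first by apply: regroup; typing.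
via (Tscale ((-1) ^+ a) (x2^[2] a ∘ cup) ∘ Tscale ((-1) ^+ b) (cap ∘ x1^[2] b)).
  by apply: eqv_comp; [apply: x1_pow_cup | apply: cap_x2_pow].
via (Tscale ((-1) ^+ a * (-1) ^+ b) ((x2^[2] a ∘ cup) ∘ (cap ∘ x1^[2] b))).
  by apply: scale_comp; typing.
rewrite -exprD -signr_odd (negbTE ab_even) expr0.
via ((x2^[2] a ∘ cup) ∘ (cap ∘ x1^[2] b)); first by apply: eqv_scale1; typing.
by apply: eqv_sym; apply: regroup; typing.
Qed.

Local Hint Extern 1 (typed (slide_sum _ _ _ _ _ _) _ _) => apply: typed_slide_sum; typing : core.

Section Cancellation.
Variable k : nat.
Hypothesis k_odd : odd k.
Local Notation S Y M W := (slide_sum 2 2 Y M W k).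

Lemma slide_sum_cup_cap_swap : S x1 cc x2 ≡[2, 2] S x2 cc x1.
Proof.
apply: eqv_sum => a; rewrite mem_iota => /andP[_ Ha].
by apply: cup_cap_swap; move: k_odd; lia.
Qed.

Lemma slide_sums_cancel : S x1 (I ⊗ I ⊖ cc) x2 ⊕ S x2 (cc ⊖ I ⊗ I) x1 ≡[2, 2] zero.
Proof.
via ((S x1 (I ⊗ I) x2 ⊖ S x1 cc x2) ⊕ (S x1 cc x2 ⊖ S x1 (I ⊗ I) x2)).
  apply: eqv_add; first by apply: slide_sum_sub; typing.
  via (S x2 cc x1 ⊖ S x2 (I ⊗ I) x1); first by apply: slide_sum_sub; typing.
  apply: eqv_add; first by apply: eqv_sym; apply: slide_sum_cup_cap_swap.
  by apply: eqv_scale; apply: eqv_sym; apply: slide_sum_id_swap.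
by apply: subr_add_subr; typing.
Qed.

End Cancellation.

Lemma central_tau r : odd r -> central r τ 2 2.
Proof.
move=> r_odd.
via ((x1^[2] r ⊕ x2^[2] r) ∘ τ); first by apply: eqv_compr; [typing | apply: power_sum2].
via (x1^[2] r ∘ τ ⊕ x2^[2] r ∘ τ); first by apply: (@eqv_compDl _ _ 2 2 2); typing.
via ((τ ∘ x2^[2] r ⊕ slide_sum 2 2 x1 (I ⊗ I ⊖ cc) x2 r)
     ⊕ (τ ∘ x1^[2] r ⊕ slide_sum 2 2 x2 (cc ⊖ I ⊗ I) x1 r)).
  apply: eqv_add; apply: endpow_slide; try typing; apply: subr_eqv; try typing.
    exact: nb_dot.
  exact: x2_tau.
via ((τ ∘ x2^[2] r ⊕ τ ∘ x1^[2] r)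
     ⊕ (slide_sum 2 2 x1 (I ⊗ I ⊖ cc) x2 r ⊕ slide_sum 2 2 x2 (cc ⊖ I ⊗ I) x1 r)).
  by apply: eqv_addrACA; typing.
via ((τ ∘ x2^[2] r ⊕ τ ∘ x1^[2] r) ⊕ zero).
  by apply: eqv_add; [refl | apply: slide_sums_cancel].
via (τ ∘ x1^[2] r ⊕ τ ∘ x2^[2] r).
  by via (τ ∘ x2^[2] r ⊕ τ ∘ x1^[2] r); [apply: eqv_addr0 | apply: eqv_addC]; typing.
via (τ ∘ (x1^[2] r ⊕ x2^[2] r)); first by apply: eqv_sym; apply: (@eqv_compDr _ _ 2 2 2); typing.
by apply: eqv_compl; [typing | apply: eqv_sym; apply: power_sum2].
Qed.

End NilBrauerCalculus.

Theorem corollary3p9 (K : fieldType) (hK : (2%:R : K) != 0) (t : bool)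
  (r : nat) (hr : odd r) :
  forall (n m : nat) (f : term K), typed f n m ->
    eqv t n m (Tcomp (power_sum K r m) f) (Tcomp f (power_sum K r n)).
Proof.
move=> n m f Hf; change (central t r f n m).
elim: Hf => {n m f}.
- exact: central_id.
- exact: central_x.
- exact: central_tau.
- exact: central_cap.
- exact: central_cup.
- by move=> g f n m p Hg Cg Hf Cf; apply: (central_comp Hg Hf).
- by move=> f g n1 m1 n2 m2 Hf Cf Hg Cg; apply: (central_tens Hf Hg).
- exact: central_zero.
- by move=> f g n m Hf Cf Hg Cg; apply: (central_add Hf Hg).
- by move=> a f n m Hf Cf; apply: (central_scale _ Hf).
Qed.
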